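(* For every $L>\pi\sqrt2$, $a_L(L)=2\,b_L(L/2)$.
   Context: For $\alpha\in(0,1/\sqrt2)$ let $L_\alpha=\pi/\mathrm{AGM}(\alpha,\tfrac12\sqrt{1+2\alpha^2})$ (arithmetic–geometric mean); $\alpha\mapsto L_\alpha$ is a decreasing bijection from $(0,1/\sqrt2)$ onto $(\pi\sqrt2,\infty)$. For $L>\pi\sqrt2$ let $\alpha$ satisfy $L_\alpha=L$ and let $x_0>y_0>0$ satisfy $x_0^2+y_0^2=1$, $x_0y_0=\alpha^2$. Let $(x_L,y_L,z_L)(t)$ solve $x'=-xz$, $y'=yz$, $z'=x^2-y^2$ ($'=d/dt$) with initial value $(x_0,y_0,0)$, and let $a_L,b_L$ solve $a'=2x_L+az_L$, $b'=2y_L-bz_L$ with $a_L(0)=b_L(0)=0$. *)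

From Stdlib Require Import Reals Lra.
From Coquelicot Require Import Coquelicot.
Open Scope R_scope.

Fixpoint agm_pair (a b : R) (n : nat) : R * R :=
  match n with
  | O => (a, b)
  | S n => let p := agm_pair a b n in ((fst p + snd p) / 2, sqrt (fst p * snd p))
  end.

Definition AGM (a b : R) : R := real (Lim_seq (fun n => fst (agm_pair a b n))).

Definition L_of (alpha : R) : R := PI / AGM alpha (sqrt (1 + 2 * alpha ^ 2) / 2).

(* The quantities x y = alpha^2 and x^2 + y^2 + z^2 = 1 are conserved, and (x - y, z)
   rotates on the circle of radius x0 - y0 with angular velocity x + y.  In terms of
   the rotation angle phi, x + y = sqrt (q^2 cos^2 phi + (2 alpha)^2 sin^2 phi) with
   q = x0 + y0, so time is an incomplete elliptic integral of phi.  Hence phi grows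
   by pi over each half period T = int_0^pi dphi / sqrt (...), during which x and y
   trade places.  Gauss's formula I(a, b) = pi / (2 AGM(a, b)) for
   I(a, b) = int_0^(pi/2) dtheta / sqrt (a^2 cos^2 theta + b^2 sin^2 theta), whose
   invariance under the AGM step is Landen's substitution, gives L = 2 T.
   Finally (a x)' = 2 x^2 and (b y)' = 2 y^2: the swap gives
   a(2T) x(2T) = a(T) x(T) + b(T) y(T), the difference a x - b y = 2 (x0 - y0) sin phi
   vanishes at T, and x(2T) = y(T). *)

From Stdlib Require Import Reals Lra Lia.
From Coquelicot Require Import Coquelicot.
Open Scope R_scope.

(* [auto_derive] leaves [ex_derive f t] and [Derive f t] for an abstract [f];
   these are discharged from hypotheses [forall s, is_derive f s (f' s)]. *)
Ltac ex_derive_from_hyps := repeat match goal with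
  | |- _ /\ _ => split
  | |- True => exact I
  | |- ex_derive (fun x => ?f x) ?t =>
      eexists; match goal with H : forall s, is_derive f s _ |- _ => apply H end
  | |- ex_derive ?f ?t =>
      eexists; match goal with H : forall s, is_derive f s _ |- _ => apply H end
  end.

Ltac rewrite_Derive_from_hyps := repeat match goal with
  | H : forall s, is_derive ?f s _ |- context [Derive (fun x : R => ?f x) ?t] =>
      rewrite (is_derive_unique (fun x : R => f x) t _ (H t))
  end.

Ltac auto_derive_hyps := auto_derive; ex_derive_from_hyps; rewrite_Derive_from_hyps.

Lemma derive_continuous (f df : R -> R) :
  (forall t, is_derive f t (df t)) -> forall t, continuous f t.
Proof. intros Hf t. apply (ex_derive_continuous f t). eexists; apply Hf. Qed.

Lemma derive_continuity (f df : R -> R) :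
  (forall t, is_derive f t (df t)) -> continuity f.
Proof.
intros Hf t. apply continuity_pt_filterlim. exact (derive_continuous f df Hf t).
Qed.

Lemma derive_zero_const (f : R -> R) :
  (forall t, is_derive f t 0) -> forall u v, f u = f v.
Proof.
intros Hf u v.
destruct (MVT_gen f u v (fun _ => 0)) as [c [_ Hc]].
- intros; apply Hf.
- intros t _. exact (derive_continuity f (fun _ => 0) Hf t).
- lra.
Qed.

Lemma same_derive_increment (F G d : R -> R) :
  (forall t, is_derive F t (d t)) -> (forall t, is_derive G t (d t)) ->
  forall u v, F v - F u = G v - G u.
Proof.
intros HF HG u v.
enough (F v - G v = F u - G u) by lra.
apply (derive_zero_const (fun t => F t - G t)).
intro t. auto_derive_hyps. ring.
Qed.

Lemma derive_pos_increasing (f df : R -> R) :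
  (forall t, is_derive f t (df t)) -> (forall t, 0 < df t) ->
  forall u v, u < v -> f u < f v.
Proof.
intros Hf Hpos u v Huv.
destruct (MVT_gen f u v df) as [c [_ Hc]].
- intros; apply Hf.
- intros t _. exact (derive_continuity f df Hf t).
- specialize (Hpos c). nra.
Qed.

Lemma is_derive_RInt_from_0 (f : R -> R) :
  (forall t, continuous f t) -> forall t, is_derive (fun u => RInt f 0 u) t (f t).
Proof.
intros Hf t. apply is_derive_RInt with (a := 0); auto.
apply filter_forall. intro u. apply RInt_correct, ex_RInt_continuous. intros; auto.
Qed.

Lemma pos_of_nonvanishing (f : R -> R) :
  continuity f -> (forall t, f t <> 0) -> 0 < f 0 -> forall t, 0 < f t.
Proof.
intros Hc Hn H0 t.
destruct (Rtotal_order (f t) 0) as [Hneg | [Hz | Hpos]]; [exfalso | now exfalso; apply (Hn t) | exact Hpos].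
destruct (Rtotal_order t 0) as [Ht | [Ht | Ht]].
- destruct (IVT f t 0 Hc Ht Hneg H0) as [c [_ Ec]]. exact (Hn c Ec).
- subst. lra.
- destruct (IVT (fun s => - f s) 0 t) as [c [_ Ec]]; try lra.
  + intro u. apply continuity_pt_opp, Hc.
  + apply (Hn c). lra.
Qed.

Lemma cos_sq_add_sin_sq (u : R) : cos u ^ 2 + sin u ^ 2 = 1.
Proof. pose proof (sin2_cos2 u) as P. unfold Rsqr in P. nra. Qed.

Lemma rotation_cos_sin (C S w th : R -> R) :
  (forall t, is_derive C t (- (S t * w t))) -> (forall t, is_derive S t (C t * w t)) ->
  (forall t, is_derive th t (w t)) -> C 0 = 1 -> S 0 = 0 -> th 0 = 0 ->
  forall t, C t = cos (th t) /\ S t = sin (th t).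
Proof.
intros HC HS Hth C0 S0 th0 t.
assert (Hdot : C t * cos (th t) + S t * sin (th t) = 1).
{ transitivity (C 0 * cos (th 0) + S 0 * sin (th 0)).
  - apply (derive_zero_const (fun t => C t * cos (th t) + S t * sin (th t))).
    intro s. auto_derive_hyps. ring.
  - rewrite C0, S0, th0, sin_0, cos_0. ring. }
assert (Hcross : S t * cos (th t) - C t * sin (th t) = 0).
{ transitivity (S 0 * cos (th 0) - C 0 * sin (th 0)).
  - apply (derive_zero_const (fun t => S t * cos (th t) - C t * sin (th t))).
    intro s. auto_derive_hyps. ring.
  - rewrite S0, th0, sin_0. ring. }
pose proof (cos_sq_add_sin_sq (th t)) as P.
set (c := cos (th t)) in *; set (s := sin (th t)) in *.
split.
- replace (C t) with (c * (C t * c + S t * s) - s * (S t * c - C t * s) + C t * (1 - (c ^ 2 + s ^ 2)))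
    by ring.
  rewrite Hdot, Hcross, P. ring.
- replace (S t) with (s * (C t * c + S t * s) + c * (S t * c - C t * s) + S t * (1 - (c ^ 2 + s ^ 2)))
    by ring.
  rewrite Hdot, Hcross, P. ring.
Qed.

Lemma angle_eq_PI (th : R -> R) (T : R) :
  continuity th -> th 0 = 0 -> 0 < T -> 0 < th T ->
  (forall t, 0 < t < T -> sin (th t) <> 0) -> cos (th T) = -1 -> th T = PI.
Proof.
intros Hc H0 HT HthT Hsin HcosT.
pose proof PI_RGT_0.
assert (Hle : th T <= PI).
{ destruct (Rle_or_lt (th T) PI) as [h | h]; auto. exfalso.
  destruct (IVT (fun t => th t - PI) 0 T) as [t [Ht Et]]; try lra.
  - intro u. apply continuity_pt_minus; [apply Hc | apply continuity_pt_const; now intros ? ?].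
  - assert (Hth : th t = PI) by lra.
    assert (t <> 0) by (intro E; subst; lra).
    assert (t <> T) by (intro E; subst; lra).
    apply (Hsin t); [lra |]. rewrite Hth. apply sin_PI. }
assert (Hs0 : sin (th T) = 0) by (pose proof (cos_sq_add_sin_sq (th T)); rewrite HcosT in *; nra).
destruct (sin_eq_0_0 _ Hs0) as [k Hk].
assert (K1 : (0 < k)%Z) by (apply lt_0_IZR; rewrite Hk in HthT; nra).
assert (K2 : (k <= 1)%Z) by (apply le_IZR; rewrite Hk in Hle; nra).
replace k with 1%Z in Hk by lia. rewrite Hk. ring.
Qed.

Definition elliptic_radicand (a b u : R) : R := a ^ 2 * cos u ^ 2 + b ^ 2 * sin u ^ 2.
Definition elliptic_root (a b u : R) : R := sqrt (elliptic_radicand a b u).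
Definition elliptic_density (a b u : R) : R := / elliptic_root a b u.
Definition elliptic_int (a b v : R) : R := RInt (elliptic_density a b) 0 v.
Definition elliptic_I (a b : R) : R := elliptic_int a b (PI / 2).

Lemma cos_sin_comb_pos (a b u : R) : 0 < a -> 0 < b -> 0 < a * cos u ^ 2 + b * sin u ^ 2.
Proof.
intros Ha Hb.
pose proof (cos_sq_add_sin_sq u).
assert (0 <= cos u ^ 2) by apply pow2_ge_0.
assert (0 <= sin u ^ 2) by apply pow2_ge_0.
destruct (Rle_lt_or_eq_dec 0 (cos u ^ 2)); nra.
Qed.

Section EllipticIntegral.
Variables a b : R.
Hypotheses (Ha : 0 < a) (Hb : 0 < b).

Lemma elliptic_radicand_pos (u : R) : 0 < elliptic_radicand a b u.
Proof. apply cos_sin_comb_pos; apply pow_lt; assumption. Qed.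

Lemma elliptic_root_pos (u : R) : 0 < elliptic_root a b u.
Proof. apply sqrt_lt_R0, elliptic_radicand_pos. Qed.

Lemma elliptic_density_pos (u : R) : 0 < elliptic_density a b u.
Proof. apply Rinv_0_lt_compat, elliptic_root_pos. Qed.

Lemma elliptic_root_density (u : R) : elliptic_root a b u * elliptic_density a b u = 1.
Proof. unfold elliptic_density. pose proof (elliptic_root_pos u). field. lra. Qed.

Lemma elliptic_radicand_derive (u : R) :
  is_derive (elliptic_radicand a b) u (2 * (b ^ 2 - a ^ 2) * sin u * cos u).
Proof. unfold elliptic_radicand. auto_derive; [exact I | ring]. Qed.

Lemma elliptic_density_derive (u : R) :
  is_derive (elliptic_density a b) u
    (- ((b ^ 2 - a ^ 2) * sin u * cos u * elliptic_density a b u / elliptic_radicand a b u)).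
Proof.
pose proof (elliptic_radicand_pos u) as HX.
pose proof (elliptic_root_pos u) as HS.
assert (HS2 : elliptic_root a b u * elliptic_root a b u = elliptic_radicand a b u)
  by (apply sqrt_sqrt; lra).
pose proof elliptic_radicand_derive as HdX.
unfold elliptic_density, elliptic_root in *.
auto_derive_hyps; try lra.
rewrite HS2. field. lra.
Qed.

Lemma elliptic_int_derive (t : R) : is_derive (elliptic_int a b) t (elliptic_density a b t).
Proof.
apply is_derive_RInt_from_0. exact (derive_continuous _ _ elliptic_density_derive).
Qed.

Lemma elliptic_int_increasing (u v : R) : u < v -> elliptic_int a b u < elliptic_int a b v.
Proof. apply (derive_pos_increasing _ _ elliptic_int_derive elliptic_density_pos). Qed.

Lemma elliptic_int_inj (u v : R) : elliptic_int a b u = elliptic_int a b v -> u = v.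
Proof.
intro E. destruct (Rtotal_order u v) as [H | [H | H]]; auto;
  [pose proof (elliptic_int_increasing u v H) | pose proof (elliptic_int_increasing v u H)]; lra.
Qed.

End EllipticIntegral.

Lemma elliptic_int_0 (a b : R) : elliptic_int a b 0 = 0.
Proof. exact (RInt_point 0 (elliptic_density a b)). Qed.

Lemma elliptic_radicand_add_PI (a b v : R) :
  elliptic_radicand a b (v + PI) = elliptic_radicand a b v.
Proof. unfold elliptic_radicand. rewrite neg_cos, neg_sin. ring. Qed.

Lemma elliptic_root_add_PI (a b v : R) : elliptic_root a b (v + PI) = elliptic_root a b v.
Proof. unfold elliptic_root. now rewrite elliptic_radicand_add_PI. Qed.

Lemma elliptic_int_add_PI (a b v : R) : 0 < a -> 0 < b ->
  elliptic_int a b (v + PI) = elliptic_int a b PI + elliptic_int a b v.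
Proof.
intros Ha Hb.
pose proof (elliptic_int_derive a b Ha Hb) as Hd.
assert (Hshift : forall t, is_derive (fun v => elliptic_int a b (v + PI)) t (elliptic_density a b t)).
{ intro t. auto_derive_hyps. unfold elliptic_density. rewrite elliptic_root_add_PI. ring. }
pose proof (same_derive_increment _ _ _ Hd Hshift 0 v) as E; cbv beta in E.
rewrite Rplus_0_l, elliptic_int_0 in E. lra.
Qed.

Lemma elliptic_int_PI (a b : R) : 0 < a -> 0 < b -> elliptic_int a b PI = 2 * elliptic_I a b.
Proof.
intros Ha Hb.
pose proof (elliptic_int_derive a b Ha Hb) as Hd.
assert (Hrefl : forall t, is_derive (fun v => - elliptic_int a b (PI - v)) t (elliptic_density a b t)).
{ intro t. auto_derive_hyps.
  unfold elliptic_density, elliptic_root, elliptic_radicand.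
  replace (PI + - t) with (PI - t) by ring.
  rewrite sin_PI_x, Rtrigo_facts.cos_pi_minus.
  replace ((- cos t) ^ 2) with (cos t ^ 2) by ring. ring. }
pose proof (same_derive_increment _ _ _ Hd Hrefl 0 (PI / 2)) as E; cbv beta in E.
replace (PI - PI / 2) with (PI / 2) in E by field. rewrite Rminus_0_r, elliptic_int_0 in E.
unfold elliptic_I. lra.
Qed.

Lemma elliptic_I_sym (a b : R) : 0 < a -> 0 < b -> elliptic_I a b = elliptic_I b a.
Proof.
intros Ha Hb.
pose proof (elliptic_int_derive a b Ha Hb) as Hd.
pose proof (elliptic_int_derive b a Hb Ha) as Hd'.
assert (Hrefl : forall t, is_derive (fun v => - elliptic_int b a (PI / 2 - v)) t (elliptic_density a b t)).
{ intro t. auto_derive_hyps.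
  unfold elliptic_density, elliptic_root, elliptic_radicand.
  replace (PI / 2 + - t) with (PI / 2 - t) by ring.
  rewrite sin_shift, cos_shift, (Rplus_comm (b ^ 2 * _)). ring. }
pose proof (same_derive_increment _ _ _ Hd Hrefl 0 (PI / 2)) as E; cbv beta in E.
rewrite Rminus_diag, Rminus_0_r, !elliptic_int_0 in E.
unfold elliptic_I. lra.
Qed.

Lemma elliptic_I_scale (k a b : R) : 0 < k -> 0 < a -> 0 < b ->
  elliptic_I (k * a) (k * b) = elliptic_I a b / k.
Proof.
intros Hk Ha Hb.
assert (Hdens : forall u, elliptic_density (k * a) (k * b) u = elliptic_density a b u / k).
{ intro u. unfold elliptic_density, elliptic_root.
  replace (elliptic_radicand (k * a) (k * b) u) with (k ^ 2 * elliptic_radicand a b u)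
    by (unfold elliptic_radicand; ring).
  rewrite sqrt_mult, sqrt_pow2 by (pose proof (elliptic_radicand_pos a b Ha Hb u); nra).
  pose proof (elliptic_root_pos a b Ha Hb u). unfold elliptic_root in *. field. lra. }
pose proof (elliptic_int_derive a b Ha Hb) as Hd.
assert (Hd1 : forall t, is_derive (elliptic_int (k * a) (k * b)) t (elliptic_density a b t / k)).
{ intro t. rewrite <- Hdens. apply elliptic_int_derive; nra. }
assert (Hd2 : forall t, is_derive (fun v => elliptic_int a b v / k) t (elliptic_density a b t / k)).
{ intro t. auto_derive_hyps. field. lra. }
pose proof (same_derive_increment _ _ _ Hd1 Hd2 0 (PI / 2)) as E; cbv beta in E.
rewrite !elliptic_int_0 in E. unfold elliptic_I. lra.
Qed.

Lemma elliptic_I_pos (a b : R) : 0 < a -> 0 < b -> 0 < elliptic_I a b.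
Proof.
intros Ha Hb. rewrite <- (elliptic_int_0 a b).
apply elliptic_int_increasing; auto. pose proof PI_RGT_0. lra.
Qed.

Lemma elliptic_I_bounds (a b : R) : 0 < b <= a ->
  b * elliptic_I a b <= PI / 2 <= a * elliptic_I a b.
Proof.
intros [Hb Hba].
destruct (MVT_gen (elliptic_int a b) 0 (PI / 2) (elliptic_density a b)) as [c [_ Hc]].
- intros; apply elliptic_int_derive; lra.
- intros t _. exact (derive_continuity _ _ (elliptic_int_derive a b ltac:(lra) Hb) t).
- unfold elliptic_I. rewrite elliptic_int_0, Rminus_0_r in Hc. rewrite Hc.
  pose proof (elliptic_root_density a b ltac:(lra) Hb c) as Hrd.
  pose proof (elliptic_density_pos a b ltac:(lra) Hb c).
  assert (Hrad : b ^ 2 <= elliptic_radicand a b c <= a ^ 2).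
  { unfold elliptic_radicand. pose proof (cos_sq_add_sin_sq c).
    pose proof (pow2_ge_0 (cos c)). pose proof (pow2_ge_0 (sin c)).
    assert (b ^ 2 <= a ^ 2) by (simpl; nra). nra. }
  assert (Hroot : b <= elliptic_root a b c <= a).
  { pose proof (sqrt_le_1_alt _ _ (proj1 Hrad)) as Hlo.
    pose proof (sqrt_le_1_alt _ _ (proj2 Hrad)) as Hhi.
    rewrite sqrt_pow2 in Hlo, Hhi by lra. exact (conj Hlo Hhi). }
  assert (b * elliptic_density a b c <= 1 <= a * elliptic_density a b c) by (split; nra).
  pose proof PI_RGT_0. split; nra.
Qed.

(* Landen's substitution phi = theta + arctan ((b / a) tan theta), given by its
   derivative, cosine and sine. *)
Definition landen_rate (a b u : R) : R :=
  (a + b) * (a * cos u ^ 2 + b * sin u ^ 2) / elliptic_radicand a b u.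
Definition landen_angle (a b v : R) : R := RInt (landen_rate a b) 0 v.
Definition landen_cos (a b u : R) : R :=
  (a * cos u ^ 2 - b * sin u ^ 2) * elliptic_density a b u.
Definition landen_sin (a b u : R) : R := (a + b) * sin u * cos u * elliptic_density a b u.

Section Landen.
Variables a b : R.
Hypotheses (Ha : 0 < a) (Hb : 0 < b).

Lemma landen_rate_pos (u : R) : 0 < landen_rate a b u.
Proof.
unfold landen_rate.
pose proof (cos_sin_comb_pos a b u Ha Hb). pose proof (elliptic_radicand_pos a b Ha Hb u).
apply Rdiv_lt_0_compat; nra.
Qed.

Lemma landen_angle_derive (t : R) : is_derive (landen_angle a b) t (landen_rate a b t).
Proof.
apply is_derive_RInt_from_0. intro u. apply (ex_derive_continuous (landen_rate a b) u).
pose proof (elliptic_radicand_pos a b Ha Hb u).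
pose proof (elliptic_radicand_derive a b) as HdX.
unfold landen_rate. auto_derive_hyps. lra.
Qed.

Lemma landen_angle_0 : landen_angle a b 0 = 0.
Proof. exact (RInt_point 0 (landen_rate a b)). Qed.

Lemma landen_cos_derive (u : R) :
  is_derive (landen_cos a b) u (- (landen_sin a b u * landen_rate a b u)).
Proof.
pose proof (elliptic_radicand_pos a b Ha Hb u).
pose proof (elliptic_density_derive a b Ha Hb) as HdJ.
unfold landen_cos, landen_sin, landen_rate. auto_derive_hyps.
unfold elliptic_radicand in *. field. lra.
Qed.

Lemma landen_sin_derive (u : R) :
  is_derive (landen_sin a b) u (landen_cos a b u * landen_rate a b u).
Proof.
pose proof (elliptic_radicand_pos a b Ha Hb u).
pose proof (elliptic_density_derive a b Ha Hb) as HdJ.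
unfold landen_cos, landen_sin, landen_rate. auto_derive_hyps.
unfold elliptic_radicand in *. field. lra.
Qed.

Lemma landen_angle_cos_sin (t : R) :
  landen_cos a b t = cos (landen_angle a b t) /\ landen_sin a b t = sin (landen_angle a b t).
Proof.
apply rotation_cos_sin with (w := landen_rate a b);
  auto using landen_cos_derive, landen_sin_derive, landen_angle_derive, landen_angle_0.
- unfold landen_cos, elliptic_density, elliptic_root, elliptic_radicand.
  rewrite cos_0, sin_0. replace (a ^ 2 * 1 ^ 2 + b ^ 2 * 0 ^ 2) with (a ^ 2) by ring.
  rewrite sqrt_pow2 by lra. field. lra.
- unfold landen_sin. rewrite sin_0. ring.
Qed.

Lemma landen_angle_PI2 : landen_angle a b (PI / 2) = PI.
Proof.
pose proof PI_RGT_0.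
apply angle_eq_PI.
- exact (derive_continuity _ _ landen_angle_derive).
- exact landen_angle_0.
- lra.
- rewrite <- landen_angle_0.
  apply (derive_pos_increasing _ _ landen_angle_derive landen_rate_pos). lra.
- intros t Ht. rewrite <- (proj2 (landen_angle_cos_sin t)). unfold landen_sin.
  assert (0 < sin t) by (apply sin_gt_0; lra).
  assert (0 < cos t) by (apply cos_gt_0; lra).
  pose proof (elliptic_density_pos a b Ha Hb t).
  apply Rgt_not_eq. repeat apply Rmult_gt_0_compat; lra.
- rewrite <- (proj1 (landen_angle_cos_sin (PI / 2))).
  unfold landen_cos, elliptic_density, elliptic_root, elliptic_radicand.
  rewrite cos_PI2, sin_PI2. replace (a ^ 2 * 0 ^ 2 + b ^ 2 * 1 ^ 2) with (b ^ 2) by ring.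
  rewrite sqrt_pow2 by lra. field. lra.
Qed.

Lemma landen_density (t : R) :
  elliptic_density ((a + b) / 2) (sqrt (a * b)) (landen_angle a b t) * landen_rate a b t
  = 2 * elliptic_density a b t.
Proof.
destruct (landen_angle_cos_sin t) as [Ec Es].
pose proof (cos_sin_comb_pos a b t Ha Hb) as HM.
pose proof (elliptic_root_pos a b Ha Hb t) as Hr.
assert (Hr2 : elliptic_radicand a b t = elliptic_root a b t ^ 2)
  by (unfold elliptic_root; rewrite pow2_sqrt; [| left; apply elliptic_radicand_pos]; auto).
set (M := a * cos t ^ 2 + b * sin t ^ 2) in *.
set (r := elliptic_root a b t) in *.
assert (Hrad : elliptic_radicand ((a + b) / 2) (sqrt (a * b)) (landen_angle a b t)
               = ((a + b) * M / (2 * r)) ^ 2).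
{ unfold elliptic_radicand at 1. rewrite <- Ec, <- Es, pow2_sqrt by nra.
  unfold landen_cos, landen_sin, elliptic_density. fold r. unfold M. field. lra. }
unfold elliptic_density at 1, elliptic_root at 1.
rewrite Hrad, sqrt_pow2 by (apply Rlt_le, Rdiv_lt_0_compat; nra).
unfold landen_rate, elliptic_density. fold M r. rewrite Hr2. field. lra.
Qed.

End Landen.

Lemma elliptic_I_landen (a b : R) : 0 < a -> 0 < b ->
  elliptic_I ((a + b) / 2) (sqrt (a * b)) = elliptic_I a b.
Proof.
intros Ha Hb.
assert (Ha1 : 0 < (a + b) / 2) by lra.
assert (Hb1 : 0 < sqrt (a * b)) by (apply sqrt_lt_R0; nra).
pose proof (elliptic_int_derive _ _ Ha1 Hb1) as Hd1.
pose proof (elliptic_int_derive a b Ha Hb) as Hd.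
pose proof (landen_angle_derive a b Ha Hb) as Hdphi.
assert (Hcomp : forall t, is_derive (fun t => elliptic_int ((a + b) / 2) (sqrt (a * b)) (landen_angle a b t))
                              t (2 * elliptic_density a b t)).
{ intro t. rewrite <- landen_density by auto. auto_derive_hyps. ring. }
assert (Hdouble : forall t, is_derive (fun t => 2 * elliptic_int a b t) t (2 * elliptic_density a b t)).
{ intro t. auto_derive_hyps. ring. }
pose proof (same_derive_increment _ _ _ Hcomp Hdouble 0 (PI / 2)) as E; cbv beta in E.
rewrite landen_angle_PI2, landen_angle_0, !elliptic_int_0, elliptic_int_PI in E by auto.
fold (elliptic_I a b) in E. lra.
Qed.

Lemma sqrt_mul_le_mean (u v : R) : 0 < u -> 0 < v -> sqrt (u * v) <= (u + v) / 2.
Proof.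
intros Hu Hv. rewrite <- (sqrt_pow2 ((u + v) / 2)) by lra.
apply sqrt_le_1_alt. pose proof (pow2_ge_0 (u - v)). simpl in *. nra.
Qed.

Lemma agm_pair_pos (a b : R) (n : nat) : 0 < a -> 0 < b ->
  0 < fst (agm_pair a b n) /\ 0 < snd (agm_pair a b n).
Proof.
intros Ha Hb. induction n as [|n [IHa IHb]]; simpl; [auto |].
split; [lra | apply sqrt_lt_R0; nra].
Qed.

Lemma agm_pair_snd_le_fst (a b : R) (n : nat) : 0 < a -> 0 < b ->
  snd (agm_pair a b (S n)) <= fst (agm_pair a b (S n)).
Proof.
intros Ha Hb. destruct (agm_pair_pos a b n Ha Hb). apply sqrt_mul_le_mean; auto.
Qed.

Lemma elliptic_I_agm_pair (a b : R) (n : nat) : 0 < a -> 0 < b ->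
  elliptic_I (fst (agm_pair a b n)) (snd (agm_pair a b n)) = elliptic_I a b.
Proof.
intros Ha Hb. induction n as [|n IH]; [reflexivity |].
destruct (agm_pair_pos a b n Ha Hb). simpl. rewrite elliptic_I_landen; auto.
Qed.

(* Each arithmetic-mean step at least halves the distance from [u] to [K]. *)
Lemma is_lim_seq_mean_squeeze (u v : nat -> R) (K : R) :
  (forall n, v n <= K <= u n) -> (forall n, u (S n) = (u n + v n) / 2) -> is_lim_seq u K.
Proof.
intros Hbnd Hrec.
assert (Hgeom : forall n, u n <= K + (u 0%nat - K) * (/ 2) ^ n).
{ induction n as [|n IH]; simpl; [lra |].
  rewrite Hrec. specialize (Hbnd n). lra. }
apply is_lim_seq_le_le with (u := fun _ => K) (w := fun n => K + (u 0%nat - K) * (/ 2) ^ n).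
- intro n. split; [apply Hbnd | apply Hgeom].
- apply is_lim_seq_const.
- assert (Hpow : is_lim_seq (fun n => (/ 2) ^ n) 0)
    by (apply is_lim_seq_geom; rewrite Rabs_pos_eq; lra).
  pose proof (is_lim_seq_plus' _ _ _ _ (is_lim_seq_const K)
                (is_lim_seq_mult' _ _ _ _ (is_lim_seq_const (u 0%nat - K)) Hpow)) as Hw.
  rewrite Rmult_0_r, Rplus_0_r in Hw. exact Hw.
Qed.

Theorem elliptic_I_AGM (a b : R) : 0 < a -> 0 < b -> elliptic_I a b = PI / (2 * AGM a b).
Proof.
intros Ha Hb.
pose proof (elliptic_I_pos a b Ha Hb) as HI.
set (K := PI / 2 / elliptic_I a b).
assert (Hlim : is_lim_seq (fun n => fst (agm_pair a b (S n))) K).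
{ apply is_lim_seq_mean_squeeze with (v := fun n => snd (agm_pair a b (S n))); [| reflexivity].
  intro n. destruct (agm_pair_pos a b (S n) Ha Hb) as [_ Hv].
  pose proof (elliptic_I_bounds _ _ (conj Hv (agm_pair_snd_le_fst a b n Ha Hb))) as Hbnd.
  rewrite elliptic_I_agm_pair in Hbnd by auto.
  unfold K. split; [apply Rle_div_r | apply Rle_div_l]; lra. }
assert (HAGM : AGM a b = K).
{ unfold AGM. rewrite <- Lim_seq_incr_1, (is_lim_seq_unique _ _ Hlim). reflexivity. }
rewrite HAGM. unfold K. pose proof PI_RGT_0. field. lra.
Qed.

Lemma L_of_elliptic (alpha : R) : 0 < alpha ->
  L_of alpha = 2 * elliptic_int (sqrt (1 + 2 * alpha ^ 2)) (2 * alpha) PI.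
Proof.
intro Hal.
set (q := sqrt (1 + 2 * alpha ^ 2)).
assert (Hq : 0 < q) by (apply sqrt_lt_R0; pose proof (pow2_ge_0 alpha); lra).
pose proof (elliptic_I_pos alpha (q / 2) Hal ltac:(lra)) as HI.
rewrite elliptic_I_AGM in HI by lra.
assert (HAGM : AGM alpha (q / 2) <> 0)
  by (intro E; rewrite E, Rmult_0_r, Rdiv_0_r in HI; lra).
rewrite elliptic_int_PI, elliptic_I_sym by lra.
replace q with (2 * (q / 2)) at 1 by field.
rewrite elliptic_I_scale, elliptic_I_AGM by lra.
unfold L_of. fold q. field. exact HAGM.
Qed.

Section Flow.
Variables (alpha : R) (x y z a b : R -> R).
Hypotheses (Halpha : 0 < alpha) (Hy0 : 0 < y 0) (Hxy0 : y 0 < x 0)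
  (Hprod0 : x 0 * y 0 = alpha ^ 2) (Hnorm0 : x 0 ^ 2 + y 0 ^ 2 = 1) (Hz0 : z 0 = 0)
  (Hx : forall t, is_derive x t (- (x t * z t)))
  (Hy : forall t, is_derive y t (y t * z t))
  (Hz : forall t, is_derive z t (x t ^ 2 - y t ^ 2)).

Lemma flow_prod (t : R) : x t * y t = alpha ^ 2.
Proof.
rewrite <- Hprod0. apply (derive_zero_const (fun t => x t * y t)).
intro s. auto_derive_hyps. ring.
Qed.

Lemma flow_norm (t : R) : x t ^ 2 + y t ^ 2 + z t ^ 2 = 1.
Proof.
transitivity (x 0 ^ 2 + y 0 ^ 2 + z 0 ^ 2).
- apply (derive_zero_const (fun t => x t ^ 2 + y t ^ 2 + z t ^ 2)).
  intro s. auto_derive_hyps. ring.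
- rewrite Hz0. lra.
Qed.

Lemma flow_sum_pos (t : R) : 0 < x t + y t.
Proof.
apply (pos_of_nonvanishing (fun t => x t + y t)); [| | lra].
- apply (derive_continuity _ (fun t => - (x t * z t) + y t * z t)).
  intro s. auto_derive_hyps. ring.
- intros s Hs. pose proof (flow_prod s). pose proof (flow_norm s).
  pose proof (pow2_ge_0 (x s)). pose proof (pow2_ge_0 (y s)). pose proof (pow2_ge_0 alpha).
  assert (Hsq : (x s + y s) ^ 2 = 1 + 2 * alpha ^ 2 - z s ^ 2) by nra.
  rewrite Hs in Hsq. simpl in Hsq. nra.
Qed.

Definition phase (t : R) : R := RInt (fun s => x s + y s) 0 t.

Lemma phase_derive (t : R) : is_derive phase t (x t + y t).
Proof.
apply (is_derive_RInt_from_0 (fun s => x s + y s)).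
apply (derive_continuous _ (fun t => - (x t * z t) + y t * z t)).
intro s. auto_derive_hyps. ring.
Qed.

Lemma phase_0 : phase 0 = 0.
Proof. exact (RInt_point 0 (fun s => x s + y s)). Qed.

Lemma flow_cos_sin (t : R) :
  x t - y t = (x 0 - y 0) * cos (phase t) /\ z t = (x 0 - y 0) * sin (phase t).
Proof.
set (p := x 0 - y 0).
assert (Hp : 0 < p) by (unfold p; lra).
destruct (rotation_cos_sin (fun t => (x t - y t) / p) (fun t => z t / p) (fun t => x t + y t) phase)
  with (t := t) as [Ec Es]; auto using phase_derive, phase_0.
- intro s. auto_derive_hyps. field. lra.
- intro s. auto_derive_hyps. field. lra.
- unfold p. field. lra.
- rewrite Hz0. field. lra.
- split; [rewrite <- Ec | rewrite <- Es]; field; lra.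
Qed.

Lemma flow_sum_root (t : R) : x t + y t = elliptic_root (x 0 + y 0) (2 * alpha) (phase t).
Proof.
pose proof (flow_sum_pos t). pose proof (flow_prod t). pose proof (flow_norm t).
destruct (flow_cos_sin t) as [_ Ez].
pose proof (cos_sq_add_sin_sq (phase t)).
assert (Hrad : elliptic_radicand (x 0 + y 0) (2 * alpha) (phase t) = (x t + y t) ^ 2).
{ unfold elliptic_radicand. rewrite Ez in *. nra. }
unfold elliptic_root. rewrite Hrad, sqrt_pow2; lra.
Qed.

Lemma elliptic_int_phase (t : R) : elliptic_int (x 0 + y 0) (2 * alpha) (phase t) = t.
Proof.
assert (Hq : 0 < x 0 + y 0) by lra.
assert (H2a : 0 < 2 * alpha) by lra.
pose proof (elliptic_int_derive _ _ Hq H2a) as Hd.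
pose proof phase_derive as Hphi.
assert (Hcomp : forall t, is_derive (fun t => elliptic_int (x 0 + y 0) (2 * alpha) (phase t)) t 1).
{ intro s. auto_derive_hyps. rewrite flow_sum_root, Rmult_comm.
  unfold elliptic_density. field. apply Rgt_not_eq, elliptic_root_pos; auto. }
assert (Hid : forall t, is_derive (fun t => t) t 1) by (intro s; auto_derive_hyps; ring).
pose proof (same_derive_increment _ _ _ Hcomp Hid 0 t) as E; cbv beta in E.
rewrite phase_0, elliptic_int_0 in E. lra.
Qed.

Let half_period := elliptic_int (x 0 + y 0) (2 * alpha) PI.

Lemma phase_add_half_period (t : R) : phase (t + half_period) = phase t + PI.
Proof.
apply (elliptic_int_inj (x 0 + y 0) (2 * alpha)); try lra.
rewrite elliptic_int_add_PI, !elliptic_int_phase by lra.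
unfold half_period. ring.
Qed.

Lemma phase_half_period : phase half_period = PI.
Proof.
pose proof (phase_add_half_period 0) as E.
rewrite Rplus_0_l, phase_0 in E. lra.
Qed.

Lemma flow_x_add_half_period (t : R) : x (t + half_period) = y t.
Proof.
destruct (flow_cos_sin t) as [Ed _]. destruct (flow_cos_sin (t + half_period)) as [Ed' _].
pose proof (flow_sum_root t) as Es. pose proof (flow_sum_root (t + half_period)) as Es'.
rewrite phase_add_half_period, neg_cos in Ed'.
rewrite phase_add_half_period, elliptic_root_add_PI in Es'.
lra.
Qed.

Hypotheses (Ha0 : a 0 = 0) (Hb0 : b 0 = 0)
  (Ha : forall t, is_derive a t (2 * x t + a t * z t))
  (Hb : forall t, is_derive b t (2 * y t - b t * z t)).

Lemma derive_a_mul_x (t : R) : is_derive (fun t => a t * x t) t (2 * x t ^ 2).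
Proof. auto_derive_hyps. ring. Qed.

Lemma derive_b_mul_y (t : R) : is_derive (fun t => b t * y t) t (2 * y t ^ 2).
Proof. auto_derive_hyps. ring. Qed.

Lemma ax_eq_by_half_period : a half_period * x half_period = b half_period * y half_period.
Proof.
pose proof phase_derive as Hphi.
assert (Hdiff : forall t, is_derive (fun t => a t * x t - b t * y t) t (2 * (x t ^ 2 - y t ^ 2))).
{ intro t. pose proof derive_a_mul_x as Hax. pose proof derive_b_mul_y as Hby.
  auto_derive_hyps. ring. }
assert (Hsin : forall t, is_derive (fun t => 2 * (x 0 - y 0) * sin (phase t)) t
                           (2 * (x t ^ 2 - y t ^ 2))).
{ intro t. auto_derive_hyps. destruct (flow_cos_sin t) as [Ed _].
  replace (x t ^ 2 - y t ^ 2) with ((x t - y t) * (x t + y t)) by ring. rewrite Ed. ring. }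
pose proof (same_derive_increment _ _ _ Hdiff Hsin 0 half_period) as E; cbv beta in E.
rewrite phase_half_period, phase_0, sin_PI, sin_0, Ha0, Hb0 in E.
lra.
Qed.

Lemma ax_add_half_period (t : R) :
  a (t + half_period) * x (t + half_period) - a half_period * x half_period = b t * y t.
Proof.
pose proof derive_a_mul_x as Hax.
assert (Hshift : forall t, is_derive (fun t => a (t + half_period) * x (t + half_period)) t
                             (2 * y t ^ 2)).
{ intro s. auto_derive_hyps. rewrite <- (flow_x_add_half_period s). ring. }
pose proof (same_derive_increment _ _ _ Hshift derive_b_mul_y 0 t) as E; cbv beta in E.
rewrite Rplus_0_l, Hb0 in E. lra.
Qed.

Theorem a_period_eq_twice_b_half_period : a (2 * half_period) = 2 * b half_period.
Proof.
pose proof (ax_add_half_period half_period) as E.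
rewrite ax_eq_by_half_period, flow_x_add_half_period in E.
replace (half_period + half_period) with (2 * half_period) in E by ring.
assert (Hyne : y half_period <> 0)
  by (intro H0; pose proof (flow_prod half_period); rewrite H0 in *; nra).
apply (Rmult_eq_reg_r (y half_period)); [lra | exact Hyne].
Qed.

End Flow.

Theorem lemma5p2 :
  forall (L alpha x0 y0 : R) (x y z a b : R -> R),
    PI * sqrt 2 < L ->
    0 < alpha < / sqrt 2 ->
    L_of alpha = L ->
    x0 > y0 -> y0 > 0 ->
    x0 ^ 2 + y0 ^ 2 = 1 ->
    x0 * y0 = alpha ^ 2 ->
    x 0 = x0 -> y 0 = y0 -> z 0 = 0 ->
    (forall t, is_derive x t (- (x t * z t))) ->
    (forall t, is_derive y t (y t * z t)) ->
    (forall t, is_derive z t (x t ^ 2 - y t ^ 2)) ->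
    a 0 = 0 -> b 0 = 0 ->
    (forall t, is_derive a t (2 * x t + a t * z t)) ->
    (forall t, is_derive b t (2 * y t - b t * z t)) ->
    a L = 2 * b (L / 2).
Proof.
intros L alpha x0 y0 x y z a b _ [Halpha _] HL Hxy0 Hy0 Hnorm0 Hprod0 X0 Y0 Z0
  Hx Hy Hz A0 B0 Ha Hb.
subst x0 y0.
assert (Hsum0 : x 0 + y 0 = sqrt (1 + 2 * alpha ^ 2)).
{ rewrite <- Hnorm0, <- Hprod0, <- (sqrt_pow2 (x 0 + y 0)) by lra. f_equal. ring. }
rewrite L_of_elliptic, <- Hsum0 in HL by exact Halpha. subst L.
replace (2 * elliptic_int (x 0 + y 0) (2 * alpha) PI / 2)
  with (elliptic_int (x 0 + y 0) (2 * alpha) PI) by field.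
apply a_period_eq_twice_b_half_period with (z := z); auto.
Qed.
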